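(* Let $f_0=1,f_1=1,f_2=2,\dots$ be the Fibonacci numbers, let $L$ be a positive integer, and set $p=f_L$, $q=f_{L+1}$. There are absolute constants $c_1,c_2>0$ such that for all integers $v\neq v'$ with $v,v'\in(-c_2q,c_2q)$ we have $\rho_q(pv,pv')>\frac{c_1q}{\max\{|v|,|v'|\}}$. Furthermore, for any $i\in[q]$ and any $t\le L$, there is $v\in\{-f_t,\dots,f_t\}$ such that $\rho_q(i,pv)\le\frac{3q}{f_t}$.
   Context: $\rho_q$ is the Lee metric on $\mathbb{Z}_q$: $\rho_q(a,b)$ is the minimum of $|j|$ over all integers $j$ with $a\equiv b+j\pmod q$. *)

From mathcomp Require Import all_boot all_order all_algebra.
From mathcomp Require Import reals.
Set Implicit Arguments. Unset Strict Implicit. Unset Printing Implicit Defensive.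
Import Order.TTheory GRing.Theory Num.Theory.
Local Open Scope ring_scope.

Fixpoint fib (n : nat) : nat :=
  match n with
  | 0 => 1
  | 1 => 1
  | (m.+1 as k).+1 => (fib k + fib m)%N
  end.

Definition lee_pred (q a b : int) : pred nat :=
  fun n => (a == b + n%:Z %[mod q])%Z || (a == b - n%:Z %[mod q])%Z.

Lemma lee_ex (q a b : int) : exists n, lee_pred q a b n.
Proof.
exists `|a - b|%N; apply/orP; rewrite /lee_pred abszE.
have [h|h] := lerP 0 (a - b).
- left; rewrite ger0_norm //.
  by have -> : b + (a - b) = a by rewrite addrC subrK.
- right; rewrite ltr0_norm // opprK.
  by have -> : b + (a - b) = a by rewrite addrC subrK.
Qed.

(* Lee metric rho_q(a,b) = min { |j| : j integer, a = b + j (mod q) } *)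
Definition lee (q a b : int) : nat := ex_minn (lee_ex q a b).

From mathcomp Require Import all_boot all_order all_algebra.
From mathcomp Require Import reals.
From mathcomp Require Import zify ring lra.
Set Implicit Arguments. Unset Strict Implicit. Unset Printing Implicit Defensive.
Import Order.TTheory GRing.Theory Num.Theory.
Local Open Scope ring_scope.

(* Write F for the Fibonacci numbers with F_0 = 0, so that p = F_m and q = F_(m+1).
   The pairs (w, r) with r = p' w (mod q), where p' = +-p, form a lattice of determinant q.
   For every i <= m, d'Ocagne's identity shows that (F_i, F_(m-i+1)) and (F_(i+1), -F_(m-i))
   belong to it, and the addition formula q = F_i F_(m-i) + F_(i+1) F_(m-i+1) shows that they
   form a basis.  If F_i <= |w| < F_(i+1), the coordinates of (w, r) in this basis have
   opposite signs, so |r| >= F_(m-i+1) and q <= 3 |w| |r|: this is the lower bound on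
   rho_q(pv, pv') with w = v - v'.  Rounding down the coordinates of (0, I) in the basis of
   index t - 1 gives |v| < F_(t+1) = f_t and a remainder of size < F_(m-t+2), hence
   f_t rho_q(I, pv) <= 2q. *)

Fixpoint fibz (n : nat) : int :=
  match n with
  | 0 => 0
  | 1 => 1
  | (m.+1 as k).+1 => fibz k + fibz m
  end.

Lemma fibzSS n : fibz n.+2 = fibz n.+1 + fibz n. Proof. by []. Qed.

Lemma fib_fibz n : (fib n)%:Z = fibz n.+1.
Proof.
suff : (fib n)%:Z = fibz n.+1 /\ (fib n.+1)%:Z = fibz n.+2 by case.
elim: n => [|n [IH1 IH2]] //; split => //.
by rewrite fibzSS -IH1 -IH2 -PoszD.
Qed.

Lemma fibz_ge0 n : 0 <= fibz n.
Proof. by case: n => [|n] //; rewrite -fib_fibz. Qed.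

Lemma fibz_gt0 n : 0 < fibz n.+1.
Proof. elim: n => [|n IH] //; rewrite fibzSS; have := fibz_ge0 n; lia. Qed.

Lemma fibz_le_succ n : fibz n <= fibz n.+1.
Proof. case: n => [|n] //; rewrite fibzSS; have := fibz_ge0 n; lia. Qed.

Lemma fibz_add a b : fibz (a + b).+1 = fibz a * fibz b + fibz a.+1 * fibz b.+1.
Proof.
elim: a b => [|a IH] b; first by rewrite add0n /=; ring.
by rewrite addSnnS IH !fibzSS; ring.
Qed.

Lemma fibz_dOcagne i c :
  (-1) ^+ i * (fibz (i + c) * fibz i.+1 - fibz (i + c).+1 * fibz i) = fibz c.
Proof.
elim: i => [|i IH]; first by rewrite add0n /=; ring.
by rewrite -[in RHS]IH exprS addSn [fibz (i + c).+2]fibzSS [fibz i.+2]fibzSS; ring.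
Qed.

Lemma fibzSS_le_double n : fibz n.+2 <= 2 * fibz n.+1.
Proof. by rewrite fibzSS; have := fibz_le_succ n; lia. Qed.

Lemma fibz_bracket m (x : int) :
  0 < x -> x < fibz m.+1 -> exists2 i, (0 < i <= m)%N & fibz i <= x < fibz i.+1.
Proof.
move=> x_gt0; elim: m => [|m IH] x_lt; first by move: x_lt; rewrite /=; lia.
have [lt_x_Fm | le_Fm_x] := ltP x (fibz m.+1).
  by have [i /andP[i_gt0 i_le] Fi_x] := IH lt_x_Fm; exists i; rewrite ?i_gt0 ?leqW.
by exists m.+1; rewrite ?leqnn ?le_Fm_x.
Qed.

(* (F_i, F_(c+1)) and (F_(i+1), -F_c) lie in the lattice of the multiplier (-1)^(i+1) F_(i+c). *)
Lemma dvdz_fibz_dOcagnel i c :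
  (fibz (i + c).+1 %| (-1) ^+ i.+1 * fibz (i + c) * fibz i - fibz c.+1)%Z.
Proof.
case: i => [|i]; first by rewrite add0n mulr0 sub0r rpredN dvdzz.
apply/dvdzP; exists ((-1) ^+ i * fibz i).
by rewrite -(fibz_dOcagne i c.+1) addSnnS !exprS; ring.
Qed.

Lemma dvdz_fibz_dOcagner i c :
  (fibz (i + c).+1 %| (-1) ^+ i.+1 * fibz (i + c) * fibz i.+1 + fibz c)%Z.
Proof.
apply/dvdzP; exists (- (-1) ^+ i * fibz i).
by rewrite -(fibz_dOcagne i c) exprS; ring.
Qed.

(* If |aA + bB| < B, then a and b cannot be nonzero of the same sign. *)
Lemma norm_comb_ge (a b A B al be : int) :
  0 < A -> 0 <= be <= al -> 0 < `|a * A + b * B| < B -> al <= `|a * al - b * be|.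
Proof.
move=> A_gt0 /andP[be_ge0 be_le_al] /andP[w_gt0 w_lt].
case: (ltgtP a 0) => ha; case: (ltgtP b 0) => hb; nia.
Qed.

(* (A, al) and (B, -be) span the lattice {(w, r) | q %| p w - r} of determinant q. *)
Section PlaneLattice.

Variables (p q A B al be : int).
Hypotheses (q_def : q = A * be + B * al)
  (dvd_pA : (q %| p * A - al)%Z) (dvd_pB : (q %| p * B + be)%Z).
Hypotheses (A_ge0 : 0 <= A) (B_gt0 : 0 < B) (be_ge0 : 0 <= be) (be_le_al : be <= al)
  (al_gt0 : 0 < al).

Lemma lattice_det_gt0 : 0 < q.
Proof. by rewrite q_def; nia. Qed.

Lemma lattice_mem (a b : int) : (q %| p * (a * A + b * B) - (a * al - b * be))%Z.
Proof.
have -> : p * (a * A + b * B) - (a * al - b * be) = a * (p * A - al) + b * (p * B + be).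
  by ring.
by rewrite rpredD ?dvdz_mull.
Qed.

Lemma lattice_coords (w r : int) : (q %| p * w - r)%Z ->
  exists a b : int, w = a * A + b * B /\ r = a * al - b * be.
Proof.
move=> dvd_wr; have q_neq0 : q != 0 by rewrite gt_eqF ?lattice_det_gt0.
have /dvdzP[a a_def] : (q %| w * be + B * r)%Z.
  have -> : w * be + B * r = w * (p * B + be) - B * (p * w - r) by ring.
  by rewrite rpredB ?dvdz_mull.
have /dvdzP[b b_def] : (q %| al * w - A * r)%Z.
  have -> : al * w - A * r = A * (p * w - r) - w * (p * A - al) by ring.
  by rewrite rpredB ?dvdz_mull.
exists a, b; split; apply: (mulIf q_neq0).
- have -> : (a * A + b * B) * q = (a * q) * A + (b * q) * B by ring.
  by rewrite -a_def -b_def q_def; ring.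
- have -> : (a * al - b * be) * q = (a * q) * al - (b * q) * be by ring.
  by rewrite -a_def -b_def q_def; ring.
Qed.

Lemma lattice_short_vector (w r : int) : 0 < A -> B <= 2 * A -> A <= `|w| < B ->
  (q %| p * w - r)%Z -> q <= 3 * `|w| * `|r|.
Proof.
move=> A_gt0 B_le /andP[A_le_w w_lt_B] /lattice_coords[a [b [w_def r_def]]].
have al_le_r : al <= `|r|.
  rewrite r_def; apply: (norm_comb_ge (B := B) A_gt0); first by rewrite be_ge0.
  by rewrite -w_def; lia.
have Aal_le : A * al <= `|w| * `|r| by apply: ler_pM; lia.
have Abe_le : A * be <= A * al by apply: ler_wpM2l; lia.
have Bal_le : B * al <= 2 * A * al by apply: ler_wpM2r; lia.
rewrite q_def -mulrA; lia.
Qed.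

Lemma lattice_approx (I : int) :
  exists v S : int, [/\ (q %| I - p * v - S)%Z, `|v| < A + B & `|S| < al].
Proof.
have q_gt0 := lattice_det_gt0; have q_neq0 : q != 0 by rewrite gt_eqF.
(* (0, I) has coordinates (B I / q, - A I / q); round them down. *)
set a := ((B * I) %/ q)%Z; set R1 := ((B * I) %% q)%Z.
set b := ((- (A * I)) %/ q)%Z; set R2 := ((- (A * I)) %% q)%Z.
have a_q : a * q = B * I - R1 by rewrite [B * I in RHS](divz_eq _ q) addrK.
have b_q : b * q = - (A * I) - R2 by rewrite [- (A * I) in RHS](divz_eq _ q) addrK.
have /andP[R1_ge0 R1_lt] : 0 <= R1 < q by rewrite modz_ge0 ?ltz_pmod.
have /andP[R2_ge0 R2_lt] : 0 <= R2 < q by rewrite modz_ge0 ?ltz_pmod.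
exists (a * A + b * B), (I - (a * al - b * be)); split.
- have -> : I - p * (a * A + b * B) - (I - (a * al - b * be)) =
            - (p * (a * A + b * B) - (a * al - b * be)) by ring.
  by rewrite rpredN lattice_mem.
- have v_q : (a * A + b * B) * q = - (R1 * A + R2 * B).
    have -> : (a * A + b * B) * q = (a * q) * A + (b * q) * B by ring.
    by rewrite a_q b_q; ring.
  have R1A : R1 * A <= (q - 1) * A by apply: ler_wpM2r; lia.
  have R2B : R2 * B <= (q - 1) * B by apply: ler_wpM2r; lia.
  have R1A_ge0 : 0 <= R1 * A by apply: mulr_ge0; lia.
  have R2B_ge0 : 0 <= R2 * B by apply: mulr_ge0; lia.
  rewrite -(ltr_pM2r q_gt0) -[q in `|_| * q](gtr0_norm q_gt0) -normrM v_q normrN.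
  rewrite !mulrBl !mul1r in R1A R2B; lia.
- have S_q : (I - (a * al - b * be)) * q = R1 * al - R2 * be.
    have -> : (I - (a * al - b * be)) * q = I * q - (a * q) * al + (b * q) * be by ring.
    by rewrite a_q b_q q_def; ring.
  have R1al : R1 * al <= (q - 1) * al by apply: ler_wpM2r; lia.
  have R2be : R2 * be <= (q - 1) * al by apply: ler_pM; lia.
  have R1al_ge0 : 0 <= R1 * al by apply: mulr_ge0; lia.
  have R2be_ge0 : 0 <= R2 * be by apply: mulr_ge0; lia.
  rewrite -(ltr_pM2r q_gt0) -[q in `|_| * q](gtr0_norm q_gt0) -normrM S_q.
  rewrite !mulrBl !mul1r in R1al R2be; lia.
Qed.

End PlaneLattice.

Lemma fibz_lattice_short (m : nat) (w r : int) :
  0 < `|w| < fibz m.+1 -> (fibz m.+1 %| fibz m * w - r)%Z -> fibz m.+1 <= 3 * `|w| * `|r|.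
Proof.
move=> /andP[w_gt0 w_lt] dvd_wr.
have [[|i] /andP[i_gt0 i_le] w_bracket] := fibz_bracket w_gt0 w_lt; first by [].
have [c m_def] : exists c, m = (i.+1 + c)%N by exists (m - i.+1)%N; rewrite subnKC.
rewrite m_def in dvd_wr *; rewrite -(normrMsign i.+2 r).
apply: (lattice_short_vector (fibz_add _ _) (dvdz_fibz_dOcagnel _ _) (dvdz_fibz_dOcagner _ _)
  (fibz_ge0 _) (fibz_gt0 _) (fibz_ge0 _) (fibz_le_succ _) (fibz_gt0 _)).
- exact: fibz_gt0.
- exact: fibzSS_le_double.
- exact: w_bracket.
- by rewrite -mulrA -mulrBr dvdz_mull.
Qed.

Lemma fibz_lattice_approx (m i : nat) (I : int) : (i <= m)%N ->
  exists v S : int, [/\ (fibz m.+1 %| I - fibz m * v - S)%Z, `|v| < fibz i.+2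
                       & fibz i.+2 * `|S| <= 2 * fibz m.+1].
Proof.
move=> i_le; have [c ->] : exists c, m = (i + c)%N by exists (m - i)%N; rewrite subnKC.
set s : int := (-1) ^+ i.+1; have s_sq : s * s = 1 by rewrite -expr2 sqrr_sign.
have [v [e [dvd_e v_lt e_lt]]] := lattice_approx (fibz_add i c) (dvdz_fibz_dOcagnel i c)
  (dvdz_fibz_dOcagner i c) (fibz_ge0 i) (fibz_gt0 i) (fibz_ge0 c) (fibz_le_succ c)
  (fibz_gt0 c) (s * I).
exists v, (s * e); split.
- have -> : I - fibz (i + c) * v - s * e =
    s * (s * I - s * fibz (i + c) * v - e) + (1 - s * s) * (I - fibz (i + c) * v) by ring.
  by rewrite s_sq subrr mul0r addr0 dvdz_mull.
- by rewrite fibzSS addrC.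
- have e_le : (fibz i.+1 + fibz i) * `|e| <= (fibz i.+1 + fibz i) * fibz c.+1.
    by apply: ler_wpM2l; [rewrite addr_ge0 ?fibz_ge0 | lia].
  have Fi_le : fibz i * fibz c.+1 <= fibz i.+1 * fibz c.+1.
    by apply: ler_wpM2r; [exact: fibz_ge0 | exact: fibz_le_succ].
  have FF_ge0 : 0 <= fibz i * fibz c by rewrite mulr_ge0 ?fibz_ge0.
  rewrite normrMsign fibzSS fibz_add; rewrite mulrDl in e_le; lia.
Qed.

Lemma lee_le (q a b j : int) : (q %| a - b - j)%Z -> (lee q a b <= `|j|)%N.
Proof.
move=> dvd_j; rewrite /lee; case: ex_minnP => n _; apply.
rewrite /lee_pred !eqz_mod_dvd abszE; apply/orP.
have [j_ge0 | j_lt0] := lerP 0 j; [left; rewrite ger0_norm | right; rewrite ltr0_norm] => //.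
- by rewrite opprD addrA.
- by rewrite opprK opprD addrA.
Qed.

Lemma lee_witness (q a b : int) : exists2 j : int, (q %| a - b - j)%Z & `|j|%N = lee q a b.
Proof.
rewrite /lee; case: ex_minnP => n + _; rewrite /lee_pred !eqz_mod_dvd => /orP[] dvd_n.
- by exists n%:Z; rewrite -?addrA -?opprD.
- by exists (- n%:Z); rewrite ?abszN -?addrA -?opprD.
Qed.

Lemma lee_fibz_mul_ge (m : nat) (v v' : int) : v != v' -> `|v - v'| < fibz m.+1 ->
  fibz m.+1 <= 3 * `|v - v'| * (lee (fibz m.+1) (fibz m * v) (fibz m * v'))%:Z.
Proof.
move=> neq_vv' lt_vv'; have [j dvd_j <-] := lee_witness (fibz m.+1) (fibz m * v) (fibz m * v').
rewrite abszE; apply: fibz_lattice_short; last by rewrite mulrBr.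
by rewrite normr_gt0 subr_eq0 neq_vv' lt_vv'.
Qed.

Lemma lee_fibz_mul_approx (m t : nat) (I : int) : (t <= m)%N ->
  exists2 v : int, `|v| <= fibz t.+1
    & fibz t.+1 * (lee (fibz m.+1) I (fibz m * v))%:Z <= 2 * fibz m.+1.
Proof.
move=> t_le; have -> : fibz t.+1 = fibz t.-1.+2 by case: t {t_le}.
have [v [e [dvd_e v_lt e_le]]] := fibz_lattice_approx I (leq_trans (leq_pred t) t_le).
exists v; first exact: ltW.
apply: le_trans e_le; rewrite ler_wpM2l ?fibz_ge0 // -abszE lez_nat.
exact: lee_le.
Qed.

Lemma lee_fibz_mul_max_ge (m : nat) (v v' : int) : v != v' ->
  2 * `|v| < fibz m.+1 -> 2 * `|v'| < fibz m.+1 ->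
  0 < Num.max `|v| `|v'| /\
  fibz m.+1 <= 6 * (Num.max `|v| `|v'| * (lee (fibz m.+1) (fibz m * v) (fibz m * v'))%:Z).
Proof.
move=> neq_vv' v_lt v'_lt; set M := Num.max _ _; set n := lee _ _ _.
have [v_le v'_le] : `|v| <= M /\ `|v'| <= M by rewrite !le_max !lexx orbT.
have diff_le := ler_normB v v'.
have diff_gt0 : 0 < `|v - v'| by rewrite normr_gt0 subr_eq0.
have diff_lt : `|v - v'| < fibz m.+1 by lia.
have q_le := lee_fibz_mul_ge neq_vv' diff_lt.
have diff_n : `|v - v'| * n%:Z <= 2 * M * n%:Z by apply: ler_wpM2r => //; lia.
by split; [lia | rewrite mulrA; lia].
Qed.

Theorem lemma56 (R : realType) :
  (exists c1 c2 : R, 0 < c1 /\ 0 < c2 /\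
    forall L : nat, (0 < L)%N ->
    forall v v' : int, v != v' ->
      `|v|%:~R < c2 * (fib L.+1)%:R ->
      `|v'|%:~R < c2 * (fib L.+1)%:R ->
      c1 * (fib L.+1)%:R / (Num.max `|v| `|v'|)%:~R
        < (lee (fib L.+1)%:Z ((fib L)%:Z * v) ((fib L)%:Z * v'))%:R)
  /\
  (forall L : nat, (0 < L)%N ->
   forall i : nat, (1 <= i <= fib L.+1)%N ->
   forall t : nat, (t <= L)%N ->
   exists v : int, - (fib t)%:Z <= v <= (fib t)%:Z /\
     (lee (fib L.+1)%:Z i%:Z ((fib L)%:Z * v))%:R
       <= 3 * (fib L.+1)%:R / (fib t)%:R :> R).
Proof.
have fibR n : (fib n)%:R = (fibz n.+1)%:~R :> R by rewrite -fib_fibz.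
split.
  exists (1 / 7), (1 / 2); split; first lra; split; first lra.
  move=> L _ v v' neq_vv'; rewrite !fibR !fib_fibz => v_lt v'_lt.
  have v_small : 2 * `|v| < fibz L.+2 by rewrite -(ltr_int R) intrM; lra.
  have v'_small : 2 * `|v'| < fibz L.+2 by rewrite -(ltr_int R) intrM; lra.
  have [M_gt0 q_le] := lee_fibz_mul_max_ge neq_vv' v_small v'_small.
  rewrite ltr_pdivrMr ?ltr0z //.
  move: q_le M_gt0 (fibz_gt0 L.+1); rewrite -(ler_int R) -!(ltr_int R) !intrM.
  lra.
move=> L _ i _ t t_le.
have [v v_le bound] := lee_fibz_mul_approx i%:Z (leqW t_le).
exists v; rewrite !fibR !fib_fibz -ler_norml; split=> //.
rewrite ler_pdivlMr ?ltr0z ?fibz_gt0 //.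
move: bound (fibz_gt0 L.+1); rewrite -(ler_int R) -(ltr_int R) !intrM; lra.
Qed.
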